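(* Let $q=AB$ be a 2way-determined two-atom query over $R$ satisfying the standing assumption below. Then for every database $D$ and all facts $a,b,c\in D$ with $D\models q(ab)$: if $D\models q(ac)$ then $c\sim b$; and if $D\models q(cb)$ then $c\sim a$.
   Context: $R$ is a relation symbol of arity $k\ge1$ whose first $l$ positions form its primary key. Facts $R(\bar a)$, atoms $R(\bar x)$; $\mathrm{vars}(A)$ is the variable set of atom $A$, $\overline{\mathrm{key}}(t)$ the tuple of first $l$ entries of $t$ and $\mathrm{key}(t)$ their set; $a\sim b$ iff $\overline{\mathrm{key}}(a)=\overline{\mathrm{key}}(b)$. A database is a finite set of facts; $D\models q(ab)$ means $a,b\in D$ and $a=\mu(A)$, $b=\mu(B)$ for some mapping $\mu$ of variables to elements. $q=AB$ is 2way-determined if $\mathrm{key}(A)\not\subseteq\mathrm{key}(B)$, $\mathrm{key}(B)\not\subseteq\mathrm{key}(A)$, $\mathrm{key}(A)\subseteq\mathrm{vars}(B)$ and $\mathrm{key}(B)\subseteq\mathrm{vars}(A)$. Standing assumption: $\overline{\mathrm{key}}(A)\ne\overline{\mathrm{key}}(B)$ and $q$ is not equivalent over all consistent databases to a single-atom query. *)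

From mathcomp Require Import all_boot.
Set Implicit Arguments. Unset Strict Implicit. Unset Printing Implicit Defensive.

(* An atom R(x_1..x_k) is a k.-tuple of variables (nat); a fact R(a_1..a_k)
   is a k.-tuple of domain elements (nat). The first l positions are the key. *)

Definition inst (k : nat) (mu : nat -> nat) (A : k.-tuple nat) : k.-tuple nat :=
  map_tuple mu A.

(* \overline{key}(t) = first l entries; key(t) = their set (membership in it) *)
Definition keyt (l : nat) (t : seq nat) : seq nat := take l t.

Definition sim (l k : nat) (a b : k.-tuple nat) : Prop := keyt l a = keyt l b.

Definition sat2 (k : nat) (D : seq (k.-tuple nat)) (A B a b : k.-tuple nat) : Prop :=
  a \in D /\ b \in D /\ exists mu : nat -> nat, inst mu A = a /\ inst mu B = b.

Definition twoway_determined (l k : nat) (A B : k.-tuple nat) : Prop :=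
  ~ {subset keyt l A <= keyt l B} /\ ~ {subset keyt l B <= keyt l A} /\
  {subset keyt l A <= B} /\ {subset keyt l B <= A}.

Definition consistent (l k : nat) (D : seq (k.-tuple nat)) : Prop :=
  forall a b, a \in D -> b \in D -> sim l a b -> a = b.

Definition models2 (k : nat) (D : seq (k.-tuple nat)) (A B : k.-tuple nat) : Prop :=
  exists a b, sat2 D A B a b.
Definition models1 (k : nat) (D : seq (k.-tuple nat)) (C : k.-tuple nat) : Prop :=
  exists c, c \in D /\ exists mu : nat -> nat, inst mu C = c.

Definition equiv_single_atom (l k : nat) (A B : k.-tuple nat) : Prop :=
  exists C : k.-tuple nat, forall D : seq (k.-tuple nat),
    consistent l D -> (models2 D A B <-> models1 D C).

From mathcomp Require Import all_boot.
Set Implicit Arguments. Unset Strict Implicit. Unset Printing Implicit Defensive.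

(* Since key(B) ⊆ vars(A), the image mu(A) fixes mu on every key variable of
   B, hence fixes the key of mu(B): two matches sharing the A-fact produce
   key-equal B-facts.  Symmetrically key(A) ⊆ vars(B) handles a shared
   B-fact.  Only these two inclusions are needed. *)

Section KeyDetermination.

Variables k l : nat.
Implicit Types (A B a b c : k.-tuple nat) (D : seq (k.-tuple nat)).

Lemma eq_inst_in (mu nu : nat -> nat) A :
  inst mu A = inst nu A -> {in A, mu =1 nu}.
Proof. by move/(congr1 val)/eq_in_map. Qed.

Lemma sim_inst_subset (mu nu : nat -> nat) A B :
  {subset keyt l B <= A} -> inst mu A = inst nu A ->
  sim l (inst mu B) (inst nu B).
Proof.
move=> keyBA /eq_inst_in eq_mu_nu.
rewrite /sim /keyt /= -!map_take; apply/eq_in_map => x /keyBA.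
exact: eq_mu_nu.
Qed.

Lemma sat2_sym D A B a b : sat2 D A B a b -> sat2 D B A b a.
Proof. by case=> Da [Db [mu [muA muB]]]; split=> //; split=> //; exists mu. Qed.

Lemma sat2_sim_right D A B a b c :
  {subset keyt l B <= A} -> sat2 D A B a b -> sat2 D A B a c -> sim l c b.
Proof.
move=> keyBA [_ [_ [nu [nuA <-]]]] [_ [_ [mu [muA <-]]]].
by apply: sim_inst_subset keyBA _; rewrite muA nuA.
Qed.

End KeyDetermination.

Theorem lemma7p1 (k l : nat) (Hk : 0 < k) (Hl : l <= k) (A B : k.-tuple nat)
  (H2way : twoway_determined l A B)
  (Hkey : keyt l A <> keyt l B)
  (Hnot1 : ~ equiv_single_atom l A B)
  (D : seq (k.-tuple nat)) (a b c : k.-tuple nat)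
  (Ha : a \in D) (Hb : b \in D) (Hc : c \in D) :
  sat2 D A B a b ->
  (sat2 D A B a c -> sim l c b) /\ (sat2 D A B c b -> sim l c a).
Proof.
case: H2way => _ [_ [keyAB keyBA]] sat_ab; split.
- exact: sat2_sim_right keyBA sat_ab.
- move=> /sat2_sym sat_bc; exact: sat2_sim_right keyAB (sat2_sym sat_ab) sat_bc.
Qed.
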